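(* Let $\mathbb{Z} = \langle g\rangle$ act freely and cospecially on a CAT(0) cube complex $X$ by combinatorial isometries. Then the set of vertices $x\in X^{(0)}$ for which $d(x,gx)$ is minimal spans a nonempty $\langle g\rangle$-invariant convex subcomplex of $X$ (called the combinatorial minset $\mathrm{Min}(g)$).
   Context: $d$ is the combinatorial metric on the vertex set of $X$ (path metric on the 1-skeleton). An action is cospecial if the quotient cube complex is special in the sense of Haglund–Wise (hyperplanes two-sided, no self-intersection, direct self-osculation or inter-osculation). *)

(* A CAT(0) cube complex X is represented by its 1-skeleton,
   a median graph (Chepoi/Roller: 1-skeleta of CAT(0) cube complexes are
   exactly the median graphs, and X is the cube completion of its 1-skeleton).
   Hyperplanes are represented through their (oriented) halfspaces. *)
From Stdlib Require Import ZArith List.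

Set Implicit Arguments.

Section Graphs.
Variable V : Type.
Variable adj : V -> V -> Prop.

Inductive walk : V -> V -> nat -> Prop :=
| walk0 x : walk x x 0
| walkS x y z n : adj x y -> walk y z n -> walk x z (S n).

Definition dist (x y : V) (n : nat) : Prop :=
  walk x y n /\ forall m, walk x y m -> n <= m.

Definition between (x z y : V) : Prop :=
  exists a b c, dist x z a /\ dist z y b /\ dist x y c /\ a + b = c.

Definition simple_graph : Prop :=
  (forall x y, adj x y -> adj y x) /\ (forall x, ~ adj x x).

Definition connected : Prop := forall x y, exists n, walk x y n.

Definition median_graph : Prop :=
  simple_graph /\ connected /\
  forall x y z, exists m, (between x m y /\ between y m z /\ between x m z) /\
    forall m', between x m' y /\ between y m' z /\ between x m' z -> m' = m.

(* halfspace W(x,y) of the hyperplane dual to the edge xy, on the side of x *)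
Definition halfspace (x y z : V) : Prop :=
  exists n m, dist z x n /\ dist z y m /\ n < m.

(* oriented edges xy and x'y' determine the same oriented hyperplane *)
Definition same_halfspace (x y x' y' : V) : Prop :=
  forall z, halfspace x y z <-> halfspace x' y' z.

Definition same_hyp (x y x' y' : V) : Prop :=
  same_halfspace x y x' y' \/ same_halfspace x y y' x'.

Definition cross (x y x' y' : V) : Prop :=
  (exists z, halfspace x y z /\ halfspace x' y' z) /\
  (exists z, halfspace x y z /\ halfspace y' x' z) /\
  (exists z, halfspace y x z /\ halfspace x' y' z) /\
  (exists z, halfspace y x z /\ halfspace y' x' z).

Definition no_square (v a b : V) : Prop :=
  ~ exists c, c <> v /\ adj a c /\ adj b c.

Fixpoint hamming (u w : list bool) : nat :=
  match u, w with
  | b :: u', c :: w' => (if Bool.eqb b c then 0 else 1) + hamming u' w'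
  | _, _ => 0
  end.

Definition is_cube (k : nat) (f : list bool -> V) : Prop :=
  (forall u w, length u = k -> length w = k -> f u = f w -> u = w) /\
  (forall u w, length u = k -> length w = k ->
      (adj (f u) (f w) <-> hamming u w = 1)).

(* a Z-action on X by combinatorial isometries (graph automorphisms);
   g = act 1 *)
Definition Z_action (act : Z -> V -> V) : Prop :=
  (forall x, act 0%Z x = x) /\
  (forall m n x, act (m + n)%Z x = act m (act n x)) /\
  (forall n x y, adj x y <-> adj (act n x) (act n y)).

(* free: no nontrivial element fixes a point of X, i.e. stabilises a cube *)
Definition free_action (act : Z -> V -> V) : Prop :=
  forall n, n <> 0%Z -> forall k f, is_cube k f ->
    ~ (forall u, length u = k -> exists w, length w = k /\ act n (f u) = f w).

(* Cospecial: the quotient X/<g> is special (Haglund--Wise), expressed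
   upstairs in X: hyperplanes of X/<g> are the <g>-orbits of hyperplanes
   of X. *)
Definition two_sided_q (act : Z -> V -> V) : Prop :=
  forall n x y, adj x y -> ~ same_halfspace (act n x) (act n y) y x.

Definition no_self_intersection_q (act : Z -> V -> V) : Prop :=
  forall n x y, adj x y -> ~ cross x y (act n x) (act n y).

Definition no_direct_self_osculation_q (act : Z -> V -> V) : Prop :=
  ~ exists n v a b,
      adj v a /\ adj v b /\ a <> b /\
      (* va, vb project to distinct edges of the quotient *)
      ~ (exists m, (act m v = v /\ act m a = b) \/ (act m v = b /\ act m a = v)) /\
      (* dual to the same hyperplane of the quotient, both oriented away from v *)
      same_halfspace v b (act n v) (act n a) /\
      no_square v a b.

Definition no_interosculation_q (act : Z -> V -> V) : Prop :=
  ~ exists x1 y1 x2 y2,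
      adj x1 y1 /\ adj x2 y2 /\
      (* distinct hyperplanes of the quotient *)
      (forall n, ~ same_hyp (act n x1) (act n y1) x2 y2) /\
      (exists n, cross x1 y1 (act n x2) (act n y2)) /\
      (exists v a b n1 n2, adj v a /\ adj v b /\
         same_hyp (act n1 x1) (act n1 y1) v a /\
         same_hyp (act n2 x2) (act n2 y2) v b /\
         no_square v a b).

Definition cospecial (act : Z -> V -> V) : Prop :=
  two_sided_q act /\ no_self_intersection_q act /\
  no_direct_self_osculation_q act /\ no_interosculation_q act.

Definition minset (act : Z -> V -> V) (x : V) : Prop :=
  exists n, dist x (act 1%Z x) n /\
    forall y m, dist y (act 1%Z y) m -> n <= m.

(* a vertex set spanning a convex subcomplex: geodesically convex in X^(1) *)
Definition convex_set (M : V -> Prop) : Prop :=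
  forall x y z, M x -> M y -> between x z y -> M z.

End Graphs.

(* Halfspaces of a median graph are convex and gated, and every edge joining a
   halfspace to its complement determines it.  Convexity of Min(g) reduces, along
   a geodesic, to: if x, y are in Min(g) and z is a neighbour of x closer to y,
   then z is in Min(g).  Otherwise d(z,gz) = d(x,gx) + 2, which makes three of
   the four quarterspaces of the hyperplane H dual to xz and of gH nonempty; as H
   and gH do not cross, y lies on the z-side of H and the gx-side of gH, and gy
   on the x-side of H.  A first step y1 from y towards the gate of the x-side of
   H gets closer to gy; two-sidedness of H keeps y1 on the gx-side of gH, so gy1
   is closer to y1 than gy is.  Hence d(y1,gy1) < d(y,gy), contradicting
   minimality. *)

From Pilot Require Import Defs.
From Stdlib Require Import ZArith List.
From Stdlib Require Import Lia Classical ClassicalEpsilon.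
From Stdlib Require Wf_nat.

Set Implicit Arguments.
Unset Strict Implicit.

Lemma nat_least (P : nat -> Prop) :
  (exists n, P n) -> exists n, P n /\ forall m, P m -> n <= m.
Proof.
  intro HP.
  destruct (Wf_nat.dec_inh_nat_subset_has_unique_least_element P (fun n => classic (P n)) HP)
    as [n [Hn _]].
  exists n; exact Hn.
Qed.

Section Walks.
Variables (V : Type) (adj : V -> V -> Prop).

Lemma walk_cat x y z m n : walk adj x y m -> walk adj y z n -> walk adj x z (m + n).
Proof. induction 1; intro; simpl; [assumption | econstructor; eauto]. Qed.

Lemma walk_rcons x y z n : walk adj x y n -> adj y z -> walk adj x z (S n).
Proof.
  intros Hxy Hyz. rewrite <- Nat.add_1_r. apply walk_cat with y; [exact Hxy |].
  econstructor; [exact Hyz | constructor].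
Qed.

Lemma walk_sym : (forall x y, adj x y -> adj y x) ->
  forall x y n, walk adj x y n -> walk adj y x n.
Proof. intros Hsym x y n. induction 1; [constructor | eapply walk_rcons; eauto]. Qed.

End Walks.

Section MedianGraph.
Variables (V : Type) (adj : V -> V -> Prop).
Hypothesis Hmed : median_graph adj.

Definition gdist (x y : V) : nat := epsilon (inhabits 0) (dist adj x y).
Local Notation d := gdist.

Lemma adj_sym x y : adj x y -> adj y x.
Proof. destruct Hmed as [[Hsym _] _]; auto. Qed.

Lemma gdistP x y : dist adj x y (d x y).
Proof.
  destruct Hmed as [_ [Hconn _]].
  unfold gdist. apply epsilon_spec. exact (nat_least (Hconn x y)).
Qed.

Lemma dist_gdist x y n : dist adj x y n -> n = d x y.
Proof.
  intros [Hn Hnmin]. destruct (gdistP x y) as [Hd Hdmin].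
  specialize (Hnmin _ Hd). specialize (Hdmin _ Hn). lia.
Qed.

Lemma gdist_le_walk x y n : walk adj x y n -> d x y <= n.
Proof. apply (proj2 (gdistP x y)). Qed.

Lemma walk_gdist x y : walk adj x y (d x y).
Proof. apply (proj1 (gdistP x y)). Qed.

Lemma gdistxx x : d x x = 0.
Proof. pose proof (gdist_le_walk (walk0 adj x)). lia. Qed.

Lemma gdist_eq0 x y : d x y = 0 -> x = y.
Proof. intro H. pose proof (walk_gdist x y) as W. rewrite H in W. inversion W; auto. Qed.

Lemma gdistC x y : d x y = d y x.
Proof.
  pose proof (gdist_le_walk (walk_sym adj_sym (walk_gdist x y))).
  pose proof (gdist_le_walk (walk_sym adj_sym (walk_gdist y x))). lia.
Qed.

Lemma gdist_triangle x y z : d x z <= d x y + d y z.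
Proof. apply gdist_le_walk, walk_cat with y; apply walk_gdist. Qed.

Lemma gdist_adj x y : adj x y -> d x y = 1.
Proof.
  intro Hxy. destruct Hmed as [[_ Hirr] _].
  assert (W : walk adj x y 1) by (econstructor; [exact Hxy | constructor]).
  pose proof (gdist_le_walk W).
  destruct (d x y) eqn:E; [|lia].
  apply gdist_eq0 in E. subst. contradiction (Hirr y).
Qed.

Lemma gdist_succ x y n : d x y = S n -> exists x1, adj x x1 /\ d x1 y = n.
Proof.
  intro H. pose proof (walk_gdist x y) as W. rewrite H in W.
  inversion W as [|? x1 ? ? Hxx1 Wx1]; subst.
  exists x1. split; [assumption|].
  pose proof (gdist_le_walk Wx1). pose proof (gdist_triangle x x1 y).
  rewrite (gdist_adj Hxx1) in *. lia.
Qed.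

Lemma gdist_eq1 x y : d x y = 1 -> adj x y.
Proof.
  intro H. destruct (gdist_succ H) as [x1 [Hxx1 Hx1y]].
  apply gdist_eq0 in Hx1y. subst. assumption.
Qed.

Lemma betweenE x z y : Defs.between adj x z y <-> d x z + d z y = d x y.
Proof.
  split.
  - intros (a & b & c & Ha & Hb & Hc & Habc).
    rewrite (dist_gdist Ha), (dist_gdist Hb), (dist_gdist Hc) in Habc. exact Habc.
  - intro H. exists (d x z), (d z y), (d x y). repeat split; try apply gdistP. exact H.
Qed.

Lemma halfspaceE a b w : halfspace adj a b w <-> d w a < d w b.
Proof.
  split.
  - intros (n & m & Hn & Hm & Hnm). rewrite (dist_gdist Hn), (dist_gdist Hm) in Hnm. exact Hnm.
  - intro H. exists (d w a), (d w b). repeat split; try apply gdistP. exact H.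
Qed.

Definition is_median (x y z m : V) : Prop :=
  d x m + d m y = d x y /\ d y m + d m z = d y z /\ d x m + d m z = d x z.

Lemma median_exists x y z : exists m, is_median x y z m.
Proof.
  destruct Hmed as [_ [_ Hmedian]]. destruct (Hmedian x y z) as [m [[Hxy [Hyz Hxz]] _]].
  exists m. rewrite betweenE in Hxy, Hyz, Hxz. repeat split; assumption.
Qed.

Lemma median_unique x y z m m' : is_median x y z m -> is_median x y z m' -> m = m'.
Proof.
  destruct Hmed as [_ [_ Hmedian]]. destruct (Hmedian x y z) as [m0 [_ Huniq]].
  intros Hm Hm'. rewrite (Huniq m), (Huniq m'); [reflexivity| |];
  [destruct Hm' as [? [? ?]] | destruct Hm as [? [? ?]]]; rewrite !betweenE; auto.
Qed.

Lemma gdist_edge a b w : adj a b -> d w b = S (d w a) \/ d w a = S (d w b).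
Proof.
  intro Hab. destruct (median_exists w a b) as [m [Hwam [Habm Hwbm]]].
  rewrite (gdist_adj Hab) in Habm.
  destruct (d a m) eqn:Eam.
  - apply gdist_eq0 in Eam. subst m. rewrite gdistxx, (gdist_adj Hab) in *. lia.
  - assert (Emb : d m b = 0) by lia. apply gdist_eq0 in Emb. subst m.
    rewrite gdistxx, (gdistC b a), (gdist_adj Hab) in *. lia.
Qed.

Lemma gdist_common_neighbour p c q : adj p c -> adj c q -> p <> q -> d p q = 2.
Proof.
  intros Hpc Hcq Hpq. pose proof (gdist_triangle p c q).
  destruct (gdist_edge p Hcq) as [E|E]; rewrite (gdist_adj Hpc), ?(gdist_adj Hcq) in *; [lia|].
  exfalso. apply Hpq, gdist_eq0. lia.
Qed.

Lemma gdist_edges_jump x z x' z' : adj x z -> adj x' z' -> d x x' < d z z' ->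
  d z z' = d x x' + 2 /\ d z x' = d x x' + 1 /\ d x z' = d x x' + 1.
Proof.
  intros Hxz Hx'z' Hlt.
  pose proof (gdist_edge x' Hxz). pose proof (gdist_edge z' Hxz).
  pose proof (gdist_edge z Hx'z'). pose proof (gdist_edge x Hx'z').
  rewrite (gdistC x' z), (gdistC x' x), (gdistC z' z), (gdistC z' x) in *. lia.
Qed.

Lemma common_neighbour_median p q r c : adj p c -> adj q c -> adj r c ->
  p <> q -> q <> r -> p <> r -> is_median p q r c.
Proof.
  intros Hp Hq Hr Hpq Hqr Hpr. unfold is_median.
  rewrite (gdist_common_neighbour Hp (adj_sym Hq) Hpq),
    (gdist_common_neighbour Hq (adj_sym Hr) Hqr), (gdist_common_neighbour Hp (adj_sym Hr) Hpr),
    (gdist_adj Hp), (gdist_adj Hq), (gdist_adj (adj_sym Hq)), (gdist_adj (adj_sym Hr)).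
  lia.
Qed.

Lemma halfspace_square u v v' u' : adj u v -> adj v v' -> adj v' u' -> adj u' u ->
  u' <> v -> u <> v' -> forall w, d w v < d w u -> d w v' < d w u'.
Proof.
  intros Huv Hvv' Hv'u' Hu'u Hu'v Huv' w Hw.
  apply Nat.nle_gt. intro Hge.
  pose proof (gdist_edge w Huv). pose proof (gdist_edge w Hvv').
  pose proof (gdist_edge w Hv'u'). pose proof (gdist_edge w Hu'u).
  assert (Ew : d w u' = d w v /\ d w v' = S (d w v)) by lia.
  destruct (median_exists w u' v) as [m [Hwu'm [Hu'vm Hwvm]]].
  rewrite (gdist_common_neighbour Hu'u Huv Hu'v), (gdistC u' m) in Hu'vm.
  assert (Hmu' : adj m u') by (apply gdist_eq1; lia).
  assert (Hmv : adj m v) by (apply gdist_eq1; lia).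
  assert (Hmu : m <> u) by (intros ->; lia).
  assert (Hmv' : m <> v') by (intros ->; lia).
  (* u, v' and m would have the two medians u' and v *)
  apply Hu'v, (median_unique (x := u) (y := v') (z := m));
    apply common_neighbour_median; auto using adj_sym, not_eq_sym.
Qed.

Lemma halfspace_sub_crossing_edge a b u v : adj a b -> adj u v ->
  d u a < d u b -> d v b < d v a -> forall w, d w v < d w u -> d w b < d w a.
Proof.
  intro Hab. remember (d u a) as k eqn:Ek. revert u v Ek.
  induction k as [|k IH]; intros u v Ek Huv Hu Hv w Hw.
  - symmetry in Ek. apply gdist_eq0 in Ek. subst u.
    rewrite (gdist_adj (adj_sym Huv)) in Hv.
    assert (Evb : d v b = 0) by lia. apply gdist_eq0 in Evb. subst v. exact Hw.
  - pose proof (gdist_edge u Hab). pose proof (gdist_edge a Huv).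
    pose proof (gdist_edge b Huv). pose proof (gdist_edge v Hab).
    rewrite !(gdistC a), !(gdistC b) in *.
    assert (Ev : d v a = S (S k) /\ d v b = S k /\ d u b = S (S k)) by lia.
    (* slide uv one step towards ab across a square u v m u1 *)
    symmetry in Ek. destruct (gdist_succ Ek) as [u1 [Huu1 Hu1a]].
    pose proof (gdist_edge u1 Hab). pose proof (gdist_triangle u u1 b).
    rewrite (gdist_adj Huu1) in *.
    assert (Hu1b : d u1 b = S k) by lia.
    assert (Hu1v : u1 <> v) by (intros ->; lia).
    destruct (median_exists u1 v b) as [m [Hu1vm [Hvbm Hu1bm]]].
    rewrite (gdist_common_neighbour (adj_sym Huu1) Huv Hu1v), (gdistC v m) in *.
    assert (Hu1m : adj u1 m) by (apply gdist_eq1; lia).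
    assert (Hmv : adj m v) by (apply gdist_eq1; lia).
    pose proof (gdist_edge a Hu1m). pose proof (gdist_triangle v m a).
    rewrite !(gdistC a), (gdistC v m), (gdist_adj Hmv) in *.
    apply (IH u1 m); [lia | assumption | lia | lia |].
    apply (halfspace_square Huv (adj_sym Hmv) (adj_sym Hu1m) (adj_sym Huu1)); [assumption | | assumption].
    intros ->. lia.
Qed.

Lemma halfspace_crossing_edge a b u v : adj a b -> adj u v ->
  d u a < d u b -> d v b < d v a -> forall w, d w u < d w v <-> d w a < d w b.
Proof.
  intros Hab Huv Hu Hv w. split.
  - apply (halfspace_sub_crossing_edge (adj_sym Hab) (adj_sym Huv) Hv Hu).
  - intro Hw. apply Nat.nle_gt. intro Hwu.
    destruct (gdist_edge w Huv); [lia |].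
    pose proof (halfspace_sub_crossing_edge Hab Huv Hu Hv (w := w)). lia.
Qed.

Lemma halfspace_eq_crossing_edges a b a' b' u v :
  adj a b -> adj a' b' -> adj u v ->
  d u a < d u b -> d v b < d v a -> d u a' < d u b' -> d v b' < d v a' ->
  forall w, d w a < d w b <-> d w a' < d w b'.
Proof.
  intros Hab Ha'b' Huv Hu Hv Hu' Hv' w.
  rewrite <- (halfspace_crossing_edge Hab Huv Hu Hv), (halfspace_crossing_edge Ha'b' Huv Hu' Hv').
  reflexivity.
Qed.

Lemma halfspace_convex a b u v w : adj a b -> d u a < d u b -> d w a < d w b ->
  d u v + d v w = d u w -> d v a < d v b.
Proof.
  intro Hab. remember (d u v) as n eqn:En. revert u En.
  induction n as [|n IH]; intros u En Hu Hw Huvw.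
  - symmetry in En. apply gdist_eq0 in En. subst. exact Hu.
  - symmetry in En. destruct (gdist_succ En) as [u1 [Huu1 Hu1v]].
    pose proof (gdist_triangle u1 v w). pose proof (gdist_triangle u u1 w).
    rewrite (gdist_adj Huu1) in *.
    destruct (gdist_edge u1 Hab) as [Hu1 | Hu1].
    + apply (IH u1); lia.
    + (* the edge u u1 leaves the halfspace, which then cannot contain w *)
      pose proof (proj2 (halfspace_crossing_edge Hab Huu1 Hu ltac:(lia) w) Hw).
      rewrite (gdistC w u), (gdistC w u1) in *. lia.
Qed.

Lemma halfspace_gate a b y : adj a b ->
  exists p, d p a < d p b /\ forall w, d w a < d w b -> d y p + d p w = d y w.
Proof.
  intro Hab.
  destruct (nat_least (P := fun n => exists p, d p a < d p b /\ d y p = n))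
    as [n [[p [Hp Hyp]] Hmin]].
  { exists (d y a), a. rewrite gdistxx, (gdist_adj Hab). split; [lia | reflexivity]. }
  exists p. split; [exact Hp |]. intros w Hw.
  destruct (median_exists y p w) as [m [Hypm [Hpwm Hywm]]].
  assert (Hm : d m a < d m b) by exact (halfspace_convex Hab Hp Hw Hpwm).
  assert (n <= d y m) by eauto.
  assert (Emp : d m p = 0) by lia. apply gdist_eq0 in Emp. subst m. exact Hywm.
Qed.

Lemma halfspace_approach a b y : adj a b -> d y b < d y a ->
  exists y1, adj y y1 /\ forall w, d w a < d w b -> d y1 w < d y w.
Proof.
  intros Hab Hy. destruct (halfspace_gate y Hab) as [p [Hp Hgate]].
  destruct (d y p) as [|n] eqn:Eyp.
  - apply gdist_eq0 in Eyp. subst. lia.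
  - destruct (gdist_succ Eyp) as [y1 [Hyy1 Hy1p]]. exists y1. split; [exact Hyy1 |].
    intros w Hw. specialize (Hgate w Hw). pose proof (gdist_triangle y1 p w). lia.
Qed.

Section ZAction.
Variable act : Z -> V -> V.
Hypothesis HZ : Z_action adj act.
Local Notation g := (act 1%Z).

Lemma adj_act k x y : adj x y -> adj (act k x) (act k y).
Proof. destruct HZ as [_ [_ Hadj]]. apply Hadj. Qed.

Lemma walk_act k x y n : walk adj x y n -> walk adj (act k x) (act k y) n.
Proof. induction 1; [constructor | econstructor; eauto using adj_act]. Qed.

Lemma actK k x : act (- k)%Z (act k x) = x.
Proof. destruct HZ as [Hact0 [HactD _]]. rewrite <- HactD, Z.add_opp_diag_l. apply Hact0. Qed.

Lemma actKV k x : act k (act (- k)%Z x) = x.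
Proof. destruct HZ as [Hact0 [HactD _]]. rewrite <- HactD, Z.add_opp_diag_r. apply Hact0. Qed.

Lemma act_comm k l x : act k (act l x) = act l (act k x).
Proof. destruct HZ as [_ [HactD _]]. rewrite <- !HactD, Z.add_comm. reflexivity. Qed.

Lemma gdist_act k x y : d (act k x) (act k y) = d x y.
Proof.
  pose proof (gdist_le_walk (walk_act k (walk_gdist x y))).
  pose proof (gdist_le_walk (walk_act (- k) (walk_gdist (act k x) (act k y)))).
  rewrite !actK in *. lia.
Qed.

Lemma act_closer k a b y y1 :
  (forall w, d w a < d w b -> d y1 w < d y w) ->
  forall w, d w (act k a) < d w (act k b) -> d (act k y1) w < d (act k y) w.
Proof.
  intros Hcloser w. rewrite <- (actKV k w), !gdist_act. apply Hcloser.
Qed.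

Lemma minsetE x : minset adj act x <-> forall y, d x (g x) <= d y (g y).
Proof.
  split.
  - intros [n [Hn Hmin]] y. rewrite <- (dist_gdist Hn). apply (Hmin y), gdistP.
  - intro H. exists (d x (g x)). split; [apply gdistP |].
    intros y m Hy. rewrite (dist_gdist Hy). apply H.
Qed.

Lemma minset_nonempty (v0 : V) : exists x, minset adj act x.
Proof.
  destruct (nat_least (P := fun n => exists x, d x (g x) = n)) as [n [[x Hx] Hmin]].
  { exists (d v0 (g v0)), v0. reflexivity. }
  exists x. apply minsetE. intro y. rewrite Hx. apply Hmin. eauto.
Qed.

Lemma minset_act k x : minset adj act x -> minset adj act (act k x).
Proof. rewrite !minsetE. intros Hx y. rewrite act_comm, gdist_act. apply Hx. Qed.

Section Cospecial.
Hypothesis Htwo : two_sided_q adj act.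
Hypothesis Hnsi : no_self_intersection_q adj act.

Lemma translate_quarter_empty k x z : adj x z ->
  d z (act k x) < d z (act k z) -> d x (act k x) < d x (act k z) ->
  d (act k z) x < d (act k z) z ->
  forall w, d w z < d w x -> d w (act k x) < d w (act k z).
Proof.
  intros Hxz Hz Hx Hkz w Hw.
  destruct (gdist_edge w (adj_act k Hxz)) as [| Hkw]; [lia | exfalso].
  pose proof (gdist_adj Hxz). pose proof (gdist_adj (adj_sym Hxz)).
  pose proof (gdist_adj (adj_sym (adj_act k Hxz))).
  apply (Hnsi (n := k) (adj_sym Hxz)).
  unfold cross. setoid_rewrite halfspaceE.
  repeat split; [exists w | exists z | exists (act k z) | exists x]; rewrite ?gdistxx; lia.
Qed.

Lemma minset_neighbour x y z : minset adj act x -> minset adj act y -> adj x z ->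
  d y z < d y x -> minset adj act z.
Proof.
  rewrite !minsetE. intros Hx Hy Hxz Hyz.
  enough (d z (g z) <= d x (g x)) by (intro w; specialize (Hx w); lia).
  apply Nat.nlt_ge. intro Hlt.
  destruct (gdist_edges_jump Hxz (adj_act 1 Hxz) Hlt) as [Ezz [Ezx Exz]].
  assert (Hquarter : forall w, d w z < d w x -> d w (g x) < d w (g z)).
  { apply translate_quarter_empty; [exact Hxz | lia | lia |].
    rewrite !(gdistC (g z)). lia. }
  assert (Hyg : d y (g x) < d y (g z)) by auto.
  assert (Hgy : d (g y) x < d (g y) z).
  { destruct (gdist_edge (g y) Hxz) as [| Egy]; [lia |].
    rewrite <- (gdist_act 1 y z), <- (gdist_act 1 y x) in Hyz.
    specialize (Hquarter (g y)). lia. }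
  assert (Hyy : d y (g y) = d x (g x)) by (specialize (Hx y); specialize (Hy x); lia).
  destruct (halfspace_approach Hxz Hyz) as [y1 [Hyy1 Hcloser]].
  assert (Hy1 : d y1 (g x) < d y1 (g z)).
  { destruct (gdist_edge y1 (adj_act 1 Hxz)) as [| Ey1]; [lia | exfalso].
    destruct (gdist_edge y1 Hxz) as [Ey1' | Ey1']; [| specialize (Hquarter y1); lia].
    (* y y1 would cross the hyperplane of xz and its translate in the same direction *)
    apply (Htwo (n := 1%Z) (adj_sym Hxz)). intro w. rewrite !halfspaceE.
    apply (halfspace_eq_crossing_edges (adj_act 1 (adj_sym Hxz)) Hxz (adj_sym Hyy1)); lia. }
  pose proof (act_closer (k := 1%Z) Hcloser Hy1) as Hgy1.
  pose proof (Hcloser (g y) Hgy).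
  specialize (Hx y1). rewrite (gdistC (g y1)), (gdistC (g y)) in Hgy1. lia.
Qed.

Lemma minset_geodesic x y z : minset adj act x -> minset adj act y ->
  d x z + d z y = d x y -> minset adj act z.
Proof.
  remember (d x z) as n eqn:En. revert x En.
  induction n as [|n IH]; intros x En Hx Hy Hxzy.
  - symmetry in En. apply gdist_eq0 in En. subst. exact Hx.
  - symmetry in En. destruct (gdist_succ En) as [x1 [Hxx1 Hx1z]].
    pose proof (gdist_triangle x1 z y). pose proof (gdist_triangle x x1 y).
    rewrite (gdist_adj Hxx1) in *.
    apply (IH x1); [lia | | exact Hy | lia].
    apply (minset_neighbour Hx Hy Hxx1). rewrite !(gdistC y). lia.
Qed.

End Cospecial.
End ZAction.
End MedianGraph.

Theorem lemma3p3 (V : Type) (adj : V -> V -> Prop) (v0 : V)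
  (act : Z -> V -> V) :
  median_graph adj ->
  Z_action adj act ->
  free_action adj act ->
  cospecial adj act ->
  (exists x, minset adj act x) /\
  (forall n x, minset adj act x -> minset adj act (act n x)) /\
  convex_set adj (minset adj act).
Proof.
  intros Hmed HZ _ [Htwo [Hnsi _]]. split; [| split].
  - exact (minset_nonempty Hmed act v0).
  - intros n x. exact (minset_act Hmed HZ n (x := x)).
  - intros x y z Hx Hy Hxzy. rewrite (betweenE Hmed) in Hxzy.
    exact (minset_geodesic Hmed HZ Htwo Hnsi Hx Hy Hxzy).
Qed.
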